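(* Let $R,S$ be finite nonempty sets, $k$ a positive integer, $p_r>0$ ($r\in R$), $T=\sum_{r\in R}p_r$, $d_{r,s}\ge0$, and $\kappa<0$. Let $F$ be the set of $(\mathbf x,\mathbf y)$ with $x_s,y_{r,s}\in\{0,1\}$, $\sum_{s\in S}x_s=k$, $y_{r,s}\le x_s$, and $\sum_{s\in S}y_{r,s}=1$ for all $r$. For $\mathbf y$ let $\overline{\mathcal K}(\mathbf y)=\sum_{r\in R}\sum_{s\in S}p_ry_{r,s}e^{-\kappa d_{r,s}}$ and $\mathcal K(\mathbf y)=-\frac1\kappa\ln\left(\frac1T\overline{\mathcal K}(\mathbf y)\right)$. Let $U\subseteq S$ with $|S\setminus U|\ge k$, and $c_s\ge0$ for $s\in U$; set $\sigma(\mathbf x)=\sum_{s\in U}c_sx_s$. Let $\hat{\mathcal K}\in\mathbb R$ and let $(\mathbf x^*,\mathbf y^*,v^*,q^* )$ be optimal for \[ \text{(KPL}^p)\quad \min\ \overline{\mathcal K}(\mathbf y)+Te^{-\kappa\hat{\mathcal K}}(v-1)\ \text{ s.t. } (\mathbf x,\mathbf y)\in F,\ v\ge e^{q},\ q=-\kappa\,\sigma(\mathbf x), \] with $\mathcal K^*=\mathcal K(\mathbf y^* )$. Let $(\mathbf x^{all},\mathbf y^{all})$ be optimal for (KPL)$^{all}$: $\min\{\overline{\mathcal K}(\mathbf y):(\mathbf x,\mathbf y)\in F\}$, and $(\mathbf x^{rem},\mathbf y^{rem})$ optimal for (KPL)$^{rem}$: $\min\{\overline{\mathcal K}(\mathbf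 y):(\mathbf x,\mathbf y)\in F,\ x_s=0\ \forall s\in U\}$. Let $\mathcal K^{all}=\mathcal K(\mathbf y^{all})$ and $\mathcal K^{rem}=\mathcal K(\mathbf y^{rem})$. Then \[ \mathcal K^{all}\le\mathcal K^*\le\mathcal K^{rem}. \]
   Context: (KPL)$^{all}$ is the unpenalized Kolm–Pollak linear facility location model with all potential locations; (KPL)$^{rem}$ is the same model with the penalized locations $U$ removed; the same $\kappa$ (i.e. the same scaling parameter $\alpha$, with $\kappa=\alpha\epsilon$) is used in all three models. *)

From HB Require Import structures.
From mathcomp Require Import all_boot all_order all_algebra.
From mathcomp Require Import all_classical all_reals all_analysis.
Set Implicit Arguments. Unset Strict Implicit. Unset Printing Implicit Defensive.
Import Order.TTheory GRing.Theory Num.Theory.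
Local Open Scope ring_scope.

Definition feasibleF (R : realType) (Rs Ss : finType) (k : nat)
  (x : Ss -> R) (y : Rs -> Ss -> R) : Prop :=
  [/\ (forall s, x s = 0 \/ x s = 1),
      (forall r s, y r s = 0 \/ y r s = 1),
      \sum_(s : Ss) x s = k%:R,
      (forall r s, y r s <= x s) &
      (forall r, \sum_(s : Ss) y r s = 1)].

Definition Kbar (R : realType) (Rs Ss : finType) (p : Rs -> R)
  (d : Rs -> Ss -> R) (kappa : R) (y : Rs -> Ss -> R) : R :=
  \sum_(r : Rs) \sum_(s : Ss) p r * y r s * expR (- kappa * d r s).

Definition KP (R : realType) (Rs Ss : finType) (p : Rs -> R)
  (d : Rs -> Ss -> R) (kappa : R) (y : Rs -> Ss -> R) : R :=
  - kappa^-1 * ln ((\sum_(r : Rs) p r)^-1 * Kbar p d kappa y).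

Definition sigmaU (R : realType) (Ss : finType) (U : {set Ss}) (c : Ss -> R)
  (x : Ss -> R) : R := \sum_(s in U) c s * x s.

Definition feasibleKPLp (R : realType) (Rs Ss : finType) (k : nat)
  (U : {set Ss}) (c : Ss -> R) (kappa : R)
  (x : Ss -> R) (y : Rs -> Ss -> R) (v q : R) : Prop :=
  [/\ feasibleF k x y, expR q <= v & q = - kappa * sigmaU U c x].

Definition objKPLp (R : realType) (Rs Ss : finType) (p : Rs -> R)
  (d : Rs -> Ss -> R) (kappa Khat : R) (y : Rs -> Ss -> R) (v : R) : R :=
  Kbar p d kappa y + (\sum_(r : Rs) p r) * expR (- kappa * Khat) * (v - 1).

Definition optimal_KPLp (R : realType) (Rs Ss : finType) (k : nat)
  (p : Rs -> R) (d : Rs -> Ss -> R) (U : {set Ss}) (c : Ss -> R)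
  (kappa Khat : R) (x : Ss -> R) (y : Rs -> Ss -> R) (v q : R) : Prop :=
  feasibleKPLp k U c kappa x y v q /\
  forall x' y' v' q', feasibleKPLp k U c kappa x' y' v' q' ->
    objKPLp p d kappa Khat y v <= objKPLp p d kappa Khat y' v'.

Definition optimal_KPLall (R : realType) (Rs Ss : finType) (k : nat)
  (p : Rs -> R) (d : Rs -> Ss -> R) (kappa : R)
  (x : Ss -> R) (y : Rs -> Ss -> R) : Prop :=
  feasibleF k x y /\
  forall x' y', feasibleF k x' y' -> Kbar p d kappa y <= Kbar p d kappa y'.

Definition optimal_KPLrem (R : realType) (Rs Ss : finType) (k : nat)
  (p : Rs -> R) (d : Rs -> Ss -> R) (U : {set Ss}) (kappa : R)
  (x : Ss -> R) (y : Rs -> Ss -> R) : Prop :=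
  (feasibleF k x y /\ forall s, s \in U -> x s = 0) /\
  forall x' y', feasibleF k x' y' -> (forall s, s \in U -> x' s = 0) ->
    Kbar p d kappa y <= Kbar p d kappa y'.

From HB Require Import structures.
From mathcomp Require Import all_boot all_order all_algebra.
From mathcomp Require Import all_classical all_reals all_analysis.
Import Order.TTheory GRing.Theory Num.Theory.
Set Implicit Arguments. Unset Strict Implicit. Unset Printing Implicit Defensive.
Local Open Scope ring_scope.

(* Any solution of (KPL)^rem is feasible for (KPL^p) with v = 1 and no
   penalty, while every feasible point of (KPL^p) has penalty >= 0 because
   sigma(x) >= 0 and -kappa > 0 force v >= e^q >= 1.  Hence
   Kbar(y^all) <= Kbar(y^* ) <= Kbar(y^rem), and K is an increasing function
   of Kbar since -1/kappa > 0 and ln is increasing. *)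

Lemma psumr_gt0 (R : numDomainType) (I : finType) (F : I -> R) (i0 : I) :
  (forall i, 0 <= F i) -> 0 < F i0 -> 0 < \sum_i F i.
Proof.
move=> F_ge0 Fi0_gt0; rewrite (bigD1 i0) //=.
by apply: ltr_pwDl => //; apply: sumr_ge0.
Qed.

Section FacilityLocation.
Variables (R : realType) (Rs Ss : finType) (k : nat).
Implicit Types (x : Ss -> R) (y : Rs -> Ss -> R).

Lemma feasibleF_x_ge0 x y : feasibleF k x y -> forall s, 0 <= x s.
Proof. by case=> x01 _ _ _ _ s; case: (x01 s) => ->. Qed.

Lemma feasibleF_y_ge0 x y : feasibleF k x y -> forall r s, 0 <= y r s.
Proof. by case=> _ y01 _ _ _ r s; case: (y01 r s) => ->. Qed.

Lemma feasibleF_assigned x y r : feasibleF k x y -> exists s, y r s = 1.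
Proof.
case=> _ y01 _ _ y_sum; apply/not_existsP => y_ne1.
have : \sum_s y r s = 0 by apply: big1 => s _; case: (y01 r s) => // /y_ne1.
by rewrite y_sum => /eqP; rewrite oner_eq0.
Qed.

Lemma Kbar_gt0 (p : Rs -> R) (d : Rs -> Ss -> R) (kappa : R) x y :
  (0 < #|Rs|)%N -> (forall r, 0 < p r) -> feasibleF k x y ->
  0 < Kbar p d kappa y.
Proof.
move=> /card_gt0P[r0 _] p_gt0 Fxy.
have term_ge0 r s : 0 <= p r * y r s * expR (- kappa * d r s).
  by rewrite !mulr_ge0 ?expR_ge0 ?(ltW (p_gt0 r)) // (feasibleF_y_ge0 Fxy).
have [s0 y_r0s0] := feasibleF_assigned r0 Fxy.
rewrite /Kbar; apply: (psumr_gt0 (i0 := r0)) => [r|/=]; first exact: sumr_ge0.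
by apply: (psumr_gt0 (i0 := s0)) => //; rewrite y_r0s0 mulr1 mulr_gt0 ?expR_gt0.
Qed.

Lemma KP_le (p : Rs -> R) (d : Rs -> Ss -> R) (kappa : R) y y' :
  kappa < 0 -> 0 < \sum_r p r -> 0 < Kbar p d kappa y ->
  Kbar p d kappa y <= Kbar p d kappa y' -> KP p d kappa y <= KP p d kappa y'.
Proof.
move=> kappa_lt0 T_gt0 Ky_gt0 Ky_le.
have invT_gt0 : 0 < (\sum_r p r)^-1 by rewrite invr_gt0.
have scaled_gt0 : 0 < (\sum_r p r)^-1 * Kbar p d kappa y by rewrite mulr_gt0.
have scaled_le := ler_wpM2l (ltW invT_gt0) Ky_le.
rewrite /KP ler_wpM2l ?oppr_ge0 ?invr_le0 ?(ltW kappa_lt0) //.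
by rewrite ler_ln ?posrE // (lt_le_trans scaled_gt0).
Qed.

Section Penalized.
Variables (U : {set Ss}) (c : Ss -> R) (kappa : R).

Lemma sigmaU_ge0 x :
  (forall s, s \in U -> 0 <= c s) -> (forall s, 0 <= x s) -> 0 <= sigmaU U c x.
Proof. by move=> c_ge0 x_ge0; apply: sumr_ge0 => s /c_ge0 ?; exact: mulr_ge0. Qed.

Lemma sigmaU_eq0 x : (forall s, s \in U -> x s = 0) -> sigmaU U c x = 0.
Proof. by move=> x0; apply: big1 => s /x0 ->; rewrite mulr0. Qed.

Lemma feasibleKPLp_v_ge1 x y v q :
  kappa <= 0 -> (forall s, s \in U -> 0 <= c s) ->
  feasibleKPLp k U c kappa x y v q -> 1 <= v.
Proof.
move=> kappa_le0 c_ge0 [Fxy expq_le q_def].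
have q_ge0 : 0 <= q.
  rewrite q_def mulr_ge0 ?oppr_ge0 //.
  exact: sigmaU_ge0 c_ge0 (feasibleF_x_ge0 Fxy).
apply: le_trans expq_le; apply: le_trans (expR_ge1Dx _).
by rewrite lerDl.
Qed.

Lemma feasibleKPLp_removed x y :
  feasibleF k x y -> (forall s, s \in U -> x s = 0) ->
  feasibleKPLp k U c kappa x y 1 0.
Proof. by move=> Fxy x0; split; rewrite ?expR0 // sigmaU_eq0 ?mulr0. Qed.

Lemma Kbar_le_objKPLp (p : Rs -> R) (d : Rs -> Ss -> R) Khat y v :
  (forall r, 0 <= p r) -> 1 <= v ->
  Kbar p d kappa y <= objKPLp p d kappa Khat y v.
Proof.
move=> p_ge0 v_ge1; rewrite /objKPLp lerDl !mulr_ge0 ?expR_ge0 ?subr_ge0 //.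
exact: sumr_ge0.
Qed.

Lemma objKPLp_v1 (p : Rs -> R) (d : Rs -> Ss -> R) Khat y :
  objKPLp p d kappa Khat y 1 = Kbar p d kappa y.
Proof. by rewrite /objKPLp subrr mulr0 addr0. Qed.

Lemma optimal_KPLp_Kbar_le_removed (p : Rs -> R) (d : Rs -> Ss -> R) Khat
    xs ys vs qs x y :
  kappa <= 0 -> (forall s, s \in U -> 0 <= c s) -> (forall r, 0 <= p r) ->
  optimal_KPLp k p d U c kappa Khat xs ys vs qs ->
  feasibleF k x y -> (forall s, s \in U -> x s = 0) ->
  Kbar p d kappa ys <= Kbar p d kappa y.
Proof.
move=> kappa_le0 c_ge0 p_ge0 [Fs opt] Fxy x0.
have := opt _ _ _ _ (feasibleKPLp_removed Fxy x0); rewrite objKPLp_v1.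
apply: le_trans; apply: Kbar_le_objKPLp => //.
exact: feasibleKPLp_v_ge1 Fs.
Qed.

End Penalized.
End FacilityLocation.

Theorem proposition2 (R : realType) (Rs Ss : finType) (k : nat)
  (p : Rs -> R) (d : Rs -> Ss -> R) (kappa : R)
  (U : {set Ss}) (c : Ss -> R) (Khat : R)
  (xs : Ss -> R) (ys : Rs -> Ss -> R) (vs qs : R)
  (xall : Ss -> R) (yall : Rs -> Ss -> R)
  (xrem : Ss -> R) (yrem : Rs -> Ss -> R) :
  (0 < #|Rs|)%N -> (0 < #|Ss|)%N -> (0 < k)%N ->
  (forall r, 0 < p r) -> (forall r s, 0 <= d r s) -> kappa < 0 ->
  (k <= #|~: U|)%N -> (forall s, s \in U -> 0 <= c s) ->
  optimal_KPLp k p d U c kappa Khat xs ys vs qs ->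
  optimal_KPLall k p d kappa xall yall ->
  optimal_KPLrem k p d U kappa xrem yrem ->
  KP p d kappa yall <= KP p d kappa ys <= KP p d kappa yrem.
Proof.
(* The hypotheses on S, k, d and U only ensure that the optimal solutions
   exist. *)
move=> Rs_gt0 _ _ p_gt0 _ kappa_lt0 _ c_ge0 optp [Fall optall] [[Frem rem0] _].
have p_ge0 r : 0 <= p r by exact: ltW.
have T_gt0 : 0 < \sum_r p r.
  by have [r0 _] := card_gt0P Rs_gt0; exact: (psumr_gt0 (i0 := r0)).
have Fs : feasibleF k xs ys by case: optp => -[].
have all_le_s := optall _ _ Fs.
have s_le_rem :=
  optimal_KPLp_Kbar_le_removed (ltW kappa_lt0) c_ge0 p_ge0 optp Frem rem0.
have Kall_gt0 := Kbar_gt0 d kappa Rs_gt0 p_gt0 Fall.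
apply/andP; split; apply: KP_le => //.
exact: lt_le_trans all_le_s.
Qed.
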